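(* Let $n\ge1$ and let $A_1,\dots,A_n$ be events in a probability space. Then \[ \Pr\Big(\bigcup_{i=1}^n A_i\Big) \;\ge\; \frac{1}{\lceil n/2\rceil}\Big(\sum_{i=1}^n\Pr(A_i) - \frac{2}{n}\sum_{1\le i<j\le n}\Pr(A_i\cap A_j)\Big). \] *)

From Stdlib Require Import Reals Lra Lia.
Open Scope R_scope.

Record prob_space (T : Type) := ProbSpace {
  measurable : (T -> Prop) -> Prop;
  measurable_full : measurable (fun _ => True);
  measurable_compl : forall A, measurable A -> measurable (fun x => ~ A x);
  measurable_cunion : forall F : nat -> T -> Prop,
      (forall k, measurable (F k)) -> measurable (fun x => exists k, F k x);
  Pr : (T -> Prop) -> R;
  Pr_nonneg : forall A, measurable A -> 0 <= Pr A;
  Pr_full : Pr (fun _ => True) = 1;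
  Pr_sigma_additive : forall F : nat -> T -> Prop,
      (forall k, measurable (F k)) ->
      (forall k l x, k <> l -> F k x -> F l x -> False) ->
      infinite_sum (fun k => Pr (F k)) (Pr (fun x => exists k, F k x))
}.
Arguments measurable {T} _ _.
Arguments Pr {T} _ _.

Fixpoint sumR (n : nat) (f : nat -> R) : R :=
  match n with
  | O => 0
  | S k => sumR k f + f k
  end.

Definition ceil_half (n : nat) : nat := Nat.div (n + 1) 2.

From Stdlib Require Import Reals Lra Lia ZArith Classical FunctionalExtensionality PropExtensionality.
Open Scope R_scope.

(* Let N(x) be the number of indices i < n with x in A_i.  Then
   Pr(U A_i) = E[1{N >= 1}], sum_i Pr(A_i) = E[N] and
   sum_{i<j} Pr(A_i /\ A_j) = E[N(N-1)/2], so the inequality is the expectation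
   of the pointwise bound  ceil(n/2) 1{N >= 1} - N + N(N-1)/n >= 0.  For N >= 1
   this reads N(n+1) <= n ceil(n/2) + N^2, which follows from
   (N - k)(N - k - 1) >= 0 when n = 2k and from (N - k - 1)^2 >= 0 when
   n = 2k+1. *)

Lemma event_ext {T} (X Y : T -> Prop) : (forall x, X x <-> Y x) -> X = Y.
Proof.
  intros H; apply functional_extensionality; intros x.
  apply propositional_extensionality, H.
Qed.

Section ProbSpace.

Variables (T : Type) (P : prob_space T).

Lemma measurable_empty : measurable P (fun _ => False).
Proof.
  replace (fun _ : T => False) with (fun _ : T => ~ True) by (apply event_ext; tauto).
  apply measurable_compl, measurable_full.
Qed.

Lemma measurable_or X Y :
  measurable P X -> measurable P Y -> measurable P (fun x => X x \/ Y x).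
Proof.
  intros HX HY.
  replace (fun x => X x \/ Y x)
    with (fun x => exists k, (match k with O => X | _ => Y end) x).
  - apply measurable_cunion; intros [|k]; assumption.
  - apply event_ext; intros x; split.
    + intros [[|k] H]; auto.
    + intros [H|H]; [exists O | exists 1%nat]; assumption.
Qed.

Lemma measurable_and X Y :
  measurable P X -> measurable P Y -> measurable P (fun x => X x /\ Y x).
Proof.
  intros HX HY.
  replace (fun x => X x /\ Y x) with (fun x => ~ (~ X x \/ ~ Y x)).
  - apply measurable_compl, measurable_or; apply measurable_compl; assumption.
  - apply event_ext; intros x; split.
    + intros H; split; apply NNPP; tauto.
    + tauto.
Qed.

Lemma measurable_exists_lt (A : nat -> T -> Prop) m :
  (forall i, (i < m)%nat -> measurable P (A i)) ->
  measurable P (fun x => exists i, (i < m)%nat /\ A i x).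
Proof.
  induction m as [|m IH]; intros hA.
  - replace (fun x => exists i, (i < 0)%nat /\ A i x) with (fun _ : T => False).
    + apply measurable_empty.
    + apply event_ext; intros x; split; [tauto | intros [i [Hi _]]; lia].
  - replace (fun x => exists i, (i < S m)%nat /\ A i x)
      with (fun x => (exists i, (i < m)%nat /\ A i x) \/ A m x).
    + apply measurable_or; [apply IH; intros i Hi |]; apply hA; lia.
    + apply event_ext; intros x; split.
      * intros [[i [Hi H]] | H]; [exists i | exists m]; split; auto; lia.
      * intros [i [Hi H]].
        destruct (Nat.eq_dec i m) as [->|]; [now right | left; exists i; split; auto; lia].
Qed.

(* A positive mass would make the constant series [Pr P (fun _ => False)]
   diverge, contradicting countable additivity of the empty family. *)
Lemma Pr_empty : Pr P (fun _ => False) = 0.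
Proof.
  pose proof (Pr_sigma_additive _ P (fun _ _ => False)
                (fun _ => measurable_empty) (fun _ _ _ _ h _ => h)) as Hsum.
  cbv beta in Hsum.
  replace (fun x : T => exists _ : nat, False) with (fun _ : T => False) in Hsum
    by (apply event_ext; firstorder).
  set (c := Pr P (fun _ => False)) in *.
  destruct (Rle_lt_or_eq_dec 0 c (Pr_nonneg _ P _ measurable_empty)) as [Hc|Hc]; [|auto].
  destruct (Hsum (c / 2)) as [N HN]; [lra|].
  specialize (HN (S N) ltac:(lia)).
  unfold R_dist in HN; rewrite sum_cte, !S_INR in HN.
  pose proof (pos_INR N).
  rewrite Rabs_right in HN; nra.
Qed.

Lemma Pr_or_disjoint X Y :
  measurable P X -> measurable P Y -> (forall x, X x -> Y x -> False) ->
  Pr P (fun x => X x \/ Y x) = Pr P X + Pr P Y.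
Proof.
  intros HX HY Hdisj.
  set (F := fun k : nat => match k with O => X | 1%nat => Y | _ => fun _ : T => False end).
  assert (HF : forall k, measurable P (F k))
    by (intros [|[|k]]; auto using measurable_empty).
  assert (HFdisj : forall k l x, k <> l -> F k x -> F l x -> False)
    by (intros [|[|k]] [|[|l]] x Hkl; simpl; firstorder).
  pose proof (Pr_sigma_additive _ P F HF HFdisj) as Hsum.
  replace (fun x => exists k, F k x) with (fun x => X x \/ Y x) in Hsum.
  2: { apply event_ext; intros x; split.
       - intros [H|H]; [exists O | exists 1%nat]; exact H.
       - intros [[|[|k]] H]; simpl in H; tauto. }
  apply (uniqueness_sum _ _ _ Hsum).
  assert (Hpartial : forall k, (1 <= k)%nat ->
            sum_f_R0 (fun k => Pr P (F k)) k = Pr P X + Pr P Y).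
  { induction k as [|[|k] IH]; intros Hk; [lia | reflexivity |].
    rewrite tech5, IH by lia. simpl F. rewrite Pr_empty; ring. }
  intros eps Heps; exists 1%nat; intros k Hk.
  unfold R_dist; rewrite Hpartial, Rminus_diag, Rabs_R0 by lia; exact Heps.
Qed.

Lemma Pr_split B C : measurable P B -> measurable P C ->
  Pr P B = Pr P (fun x => B x /\ C x) + Pr P (fun x => B x /\ ~ C x).
Proof.
  intros HB HC.
  rewrite <- Pr_or_disjoint.
  - f_equal; apply event_ext; intros x; destruct (classic (C x)); tauto.
  - apply measurable_and; assumption.
  - apply measurable_and, measurable_compl; assumption.
  - tauto.
Qed.

Lemma and_swap_r (B X Y : T -> Prop) :
  (fun x => (B x /\ X x) /\ Y x) = (fun x => (B x /\ Y x) /\ X x).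
Proof. apply event_ext; tauto. Qed.

Variable A : nat -> T -> Prop.

(* [expect_count m B g] is the integral over [B] of [g] applied to the number
   of indices [i < m] such that [A i] holds: splitting [B] along [A (m-1)], the
   count is one larger on the part where [A (m-1)] holds. *)
Fixpoint expect_count (m : nat) (B : T -> Prop) (g : nat -> R) : R :=
  match m with
  | O => g O * Pr P B
  | S m => expect_count m (fun x => B x /\ A m x) (fun N => g (S N))
           + expect_count m (fun x => B x /\ ~ A m x) g
  end.

Lemma expect_count_plus m B f g :
  expect_count m B (fun N => f N + g N) = expect_count m B f + expect_count m B g.
Proof.
  revert B f g; induction m as [|m IH]; intros B f g; simpl; [ring|].
  rewrite (IH _ (fun N => f (S N))), IH; ring.
Qed.

Lemma expect_count_scal m B a g :
  expect_count m B (fun N => a * g N) = a * expect_count m B g.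
Proof.
  revert B g; induction m as [|m IH]; intros B g; simpl; [ring|].
  rewrite (IH _ (fun N => g (S N))), IH; ring.
Qed.

Lemma expect_count_nonneg m B g :
  (forall i, (i < m)%nat -> measurable P (A i)) -> measurable P B ->
  (forall N, (N <= m)%nat -> 0 <= g N) -> 0 <= expect_count m B g.
Proof.
  revert B g; induction m as [|m IH]; intros B g hA HB Hg; simpl.
  - apply Rmult_le_pos; [apply Hg; lia | apply Pr_nonneg, HB].
  - assert (hA' : forall i, (i < m)%nat -> measurable P (A i)) by (intros; apply hA; lia).
    apply Rplus_le_le_0_compat; apply IH;
      auto using measurable_and, measurable_compl;
      intros N HN; apply Hg; lia.
Qed.

Lemma expect_count_split m B C g :
  (forall i, (i < m)%nat -> measurable P (A i)) -> measurable P B -> measurable P C ->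
  expect_count m B g
  = expect_count m (fun x => B x /\ C x) g + expect_count m (fun x => B x /\ ~ C x) g.
Proof.
  revert B g; induction m as [|m IH]; intros B g hA HB HC; simpl.
  - rewrite (Pr_split B C) at 1 by assumption; ring.
  - assert (hA' : forall i, (i < m)%nat -> measurable P (A i)) by (intros; apply hA; lia).
    assert (HAm : measurable P (A m)) by (apply hA; lia).
    rewrite (IH (fun x => B x /\ A m x)), (IH (fun x => B x /\ ~ A m x));
      auto using measurable_and, measurable_compl.
    rewrite !(and_swap_r B (A m)), !(and_swap_r B (fun x => ~ A m x)); ring.
Qed.

Lemma expect_count_S m B g h :
  (forall i, (i < S m)%nat -> measurable P (A i)) -> measurable P B ->
  (forall N, g (S N) = g N + h N) ->
  expect_count (S m) B g = expect_count m B g + expect_count m (fun x => B x /\ A m x) h.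
Proof.
  intros hA HB Hgh.
  assert (hA' : forall i, (i < m)%nat -> measurable P (A i)) by (intros; apply hA; lia).
  rewrite (expect_count_split m B (A m)) by (auto; apply hA; lia); simpl.
  replace (fun N => g (S N)) with (fun N => g N + h N)
    by (apply functional_extensionality; auto).
  rewrite expect_count_plus; ring.
Qed.

Lemma expect_count_one m B :
  (forall i, (i < m)%nat -> measurable P (A i)) -> measurable P B ->
  expect_count m B (fun _ => 1) = Pr P B.
Proof.
  revert B; induction m as [|m IH]; intros B hA HB; simpl; [ring|].
  assert (hA' : forall i, (i < m)%nat -> measurable P (A i)) by (intros; apply hA; lia).
  assert (HAm : measurable P (A m)) by (apply hA; lia).
  rewrite !IH by auto using measurable_and, measurable_compl.
  symmetry; apply Pr_split; assumption.
Qed.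

Lemma expect_count_INR m B :
  (forall i, (i < m)%nat -> measurable P (A i)) -> measurable P B ->
  expect_count m B INR = sumR m (fun i => Pr P (fun x => B x /\ A i x)).
Proof.
  revert B; induction m as [|m IH]; intros B hA HB; [simpl; ring|].
  assert (hA' : forall i, (i < m)%nat -> measurable P (A i)) by (intros; apply hA; lia).
  assert (HAm : measurable P (A m)) by (apply hA; lia).
  rewrite (expect_count_S m B INR (fun _ => 1)), IH, expect_count_one;
    auto using measurable_and, S_INR.
Qed.

Definition binom2 (N : nat) : R := INR N * (INR N - 1) / 2.

Lemma expect_count_binom2 m B :
  (forall i, (i < m)%nat -> measurable P (A i)) -> measurable P B ->
  expect_count m B binom2
  = sumR m (fun j => sumR j (fun i => Pr P (fun x => B x /\ (A i x /\ A j x)))).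
Proof.
  revert B; induction m as [|m IH]; intros B hA HB; [unfold binom2; simpl; field|].
  assert (hA' : forall i, (i < m)%nat -> measurable P (A i)) by (intros; apply hA; lia).
  assert (HAm : measurable P (A m)) by (apply hA; lia).
  rewrite (expect_count_S m B binom2 INR), IH, expect_count_INR;
    auto using measurable_and; [| intros N; unfold binom2; rewrite S_INR; field].
  cbn [sumR]; do 2 f_equal.
  apply functional_extensionality; intros i; f_equal; apply event_ext; tauto.
Qed.

Definition indicator_pos (N : nat) : R := match N with O => 0 | S _ => 1 end.

Lemma expect_count_indicator_pos m B :
  (forall i, (i < m)%nat -> measurable P (A i)) -> measurable P B ->
  expect_count m B indicator_pos = Pr P (fun x => B x /\ exists i, (i < m)%nat /\ A i x).
Proof.
  revert B; induction m as [|m IH]; intros B hA HB.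
  - replace (fun x => B x /\ exists i, (i < 0)%nat /\ A i x) with (fun _ : T => False)
      by (apply event_ext; intros x; split; [tauto | intros [_ [i [Hi _]]]; lia]).
    rewrite Pr_empty; simpl; ring.
  - assert (hA' : forall i, (i < m)%nat -> measurable P (A i)) by (intros; apply hA; lia).
    assert (HAm : measurable P (A m)) by (apply hA; lia).
    cbn [expect_count]; rewrite expect_count_one, IH by auto using measurable_and, measurable_compl.
    rewrite (Pr_split (fun x => B x /\ exists i, (i < S m)%nat /\ A i x) (A m))
      by auto using measurable_and, measurable_exists_lt.
    f_equal; f_equal; apply event_ext; intros x; split.
    + intros [HBx HAx]; split; [split; [| exists m; split] |]; auto.
    + tauto.
    + intros [[HBx HAx] [i [Hi HAi]]]; split; [split; [| exists i; split] |]; auto.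
    + intros [[HBx [i [Hi HAi]]] HAx]; repeat split; auto.
      exists i; split; auto.
      destruct (Nat.eq_dec i m) as [->|]; [contradiction | lia].
Qed.

End ProbSpace.

Lemma ceil_half_quadratic_bound n N : (N * (n + 1) <= n * ceil_half n + N * N)%nat.
Proof.
  unfold ceil_half.
  destruct (Nat.Even_or_Odd n) as [[k ->]|[k ->]].
  - replace ((2 * k + 1) / 2)%nat with k by (apply Nat.div_unique with 1%nat; lia).
    destruct (Nat.le_gt_cases N k) as [HN|HN];
      destruct (Nat.le_exists_sub _ _ HN) as [d [-> _]]; nia.
  - replace ((2 * k + 1 + 1) / 2)%nat with (S k) by (apply Nat.div_unique with 0%nat; lia).
    pose proof (Z.square_nonneg (Z.of_nat N - Z.of_nat k - 1)); nia.
Qed.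

Lemma count_weight_nonneg n N : (1 <= n)%nat ->
  0 <= INR (ceil_half n) * indicator_pos N + -1 * INR N + 2 / INR n * binom2 N.
Proof.
  intros Hn.
  assert (Hn' : 0 < INR n) by (apply lt_0_INR; lia).
  pose proof (le_INR _ _ (ceil_half_quadratic_bound n N)) as Hbound.
  repeat rewrite ?plus_INR, ?mult_INR in Hbound; simpl (INR 1) in Hbound.
  unfold indicator_pos, binom2; destruct N as [|N].
  - simpl; lra.
  - apply Rmult_le_reg_l with (INR n); [exact Hn'|].
    replace (INR n * (INR (ceil_half n) * 1 + -1 * INR (S N)
                      + 2 / INR n * (INR (S N) * (INR (S N) - 1) / 2)))
      with (INR n * INR (ceil_half n) - INR (S N) * (INR n + 1) + INR (S N) * INR (S N))
      by (field; lra).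
    lra.
Qed.

Theorem corollary2 (T : Type) (P : prob_space T) (n : nat) (A : nat -> T -> Prop)
  (hn : (1 <= n)%nat)
  (hA : forall i, (i < n)%nat -> measurable P (A i)) :
  Pr P (fun x => exists i, (i < n)%nat /\ A i x) >=
  / INR (ceil_half n) *
    (sumR n (fun i => Pr P (A i))
     - 2 / INR n *
       sumR n (fun j => sumR j (fun i => Pr P (fun x => A i x /\ A j x)))).
Proof.
  pose proof (expect_count_nonneg T P A n (fun _ => True)
                (fun N => INR (ceil_half n) * indicator_pos N + -1 * INR N + 2 / INR n * binom2 N)
                hA (measurable_full _ P) (fun N _ => count_weight_nonneg n N hn)) as Hw.
  rewrite !expect_count_plus, !expect_count_scal, expect_count_indicator_pos, expect_count_INR,
    expect_count_binom2 in Hw by auto using measurable_full.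
  assert (True_and : forall X : T -> Prop, (fun x => True /\ X x) = X)
    by (intros; apply event_ext; tauto).
  rewrite True_and in Hw.
  replace (fun i => Pr P (fun x => True /\ A i x)) with (fun i => Pr P (A i)) in Hw
    by (apply functional_extensionality; intros; now rewrite True_and).
  replace (fun j => sumR j (fun i => Pr P (fun x => True /\ (A i x /\ A j x))))
    with (fun j => sumR j (fun i => Pr P (fun x => A i x /\ A j x))) in Hw
    by (apply functional_extensionality; intros j; f_equal;
        apply functional_extensionality; intros i; now rewrite True_and).
  assert (Hc : 0 < INR (ceil_half n))
    by (apply lt_0_INR; unfold ceil_half; apply Nat.div_str_pos; lia).
  apply Rle_ge, Rmult_le_reg_l with (INR (ceil_half n)); [exact Hc|].
  rewrite <- Rmult_assoc, Rinv_r, Rmult_1_l by lra.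
  lra.
Qed.
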